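(* Let $f_1,\dots,f_m:\mathbb R^n\to\mathbb R$ be continuously differentiable with $\nabla f_j$ being $L_j$-Lipschitz, and set $L=\max_j L_j$. Let $C_1>0$, $\tau>0$ and $x,y\in\mathbb R^n$ with $\|x\|+\|y\|\le C_1$, and let $\lambda_\tau(x,y)\in\operatorname*{argmin}_{\lambda\in\Delta_m}\{\langle\lambda,F(x)-F(y)\rangle+\frac{\tau}{2}\|DF(y)\lambda\|^2\}$. Then $$\Big\|DF(y)\lambda_\tau(x,y)-\mathrm{proj}_{C(x)}\Big(\frac{y-x}{\tau}\Big)\Big\|\le\sqrt{C_2L}\,\|x-y\|^{1/2}+\sqrt{\frac{10L}{\tau}}\,\|x-y\|,$$ where $C_2:=LC_1+2\max_{1\le j\le m}\|\nabla f_j(0)\|$.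
   Context: $F=(f_1,\dots,f_m)^\top$. $\Delta_m$ is the unit simplex in $\mathbb R^m$. $DF(y)=[\nabla f_1(y),\dots,\nabla f_m(y)]\in\mathbb R^{n\times m}$. $C(x)=\mathrm{conv}\{\nabla f_1(x),\dots,\nabla f_m(x)\}$, and $\mathrm{proj}_C$ is the Euclidean projection onto the closed convex set $C$. *)

From HB Require Import structures.
From mathcomp Require Import all_boot all_order all_algebra.
From mathcomp Require Import all_classical all_reals all_analysis.
Set Implicit Arguments. Unset Strict Implicit. Unset Printing Implicit Defensive.
Import Order.TTheory GRing.Theory Num.Theory.
Import numFieldNormedType.Exports.
Local Open Scope ring_scope.

Section Defs.
Variable R : realType.

(* Euclidean inner product and norm on R^n (the library norm on 'rV is the max norm) *)
Definition dotv (n : nat) (u v : 'rV[R]_n) : R := \sum_(i < n) u 0 i * v 0 i.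
Definition enorm (n : nat) (u : 'rV[R]_n) : R := Num.sqrt (dotv u u).

Definition grad (n : nat) (f : 'rV[R]_n -> R) (x : 'rV[R]_n) : 'rV[R]_n :=
  \row_(i < n) ('d f x (delta_mx 0 i : 'rV[R]_n)).

Definition simplex (m : nat) (lam : 'rV[R]_m) : Prop :=
  (forall j, 0 <= lam 0 j) /\ \sum_(j < m) lam 0 j = 1.

Definition DFmul (m n : nat) (f : 'I_m -> 'rV[R]_n -> R) (y : 'rV[R]_n)
  (lam : 'rV[R]_m) : 'rV[R]_n := \sum_(j < m) lam 0 j *: grad (f j) y.

Definition convgrad (m n : nat) (f : 'I_m -> 'rV[R]_n -> R) (x : 'rV[R]_n)
  (c : 'rV[R]_n) : Prop := exists mu, simplex mu /\ c = DFmul f x mu.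

Definition is_proj (n : nat) (C : 'rV[R]_n -> Prop) (z p : 'rV[R]_n) : Prop :=
  C p /\ forall c, C c -> enorm (z - p) <= enorm (z - c).

Definition lam_obj (m n : nat) (f : 'I_m -> 'rV[R]_n -> R) (tau : R)
  (x y : 'rV[R]_n) (lam : 'rV[R]_m) : R :=
  \sum_(j < m) lam 0 j * (f j x - f j y) + tau / 2 * enorm (DFmul f y lam) ^+ 2.

Definition is_argmin_simplex (m n : nat) (f : 'I_m -> 'rV[R]_n -> R) (tau : R)
  (x y : 'rV[R]_n) (lam : 'rV[R]_m) : Prop :=
  simplex lam /\ forall mu, simplex mu -> lam_obj f tau x y lam <= lam_obj f tau x y mu.

End Defs.

From HB Require Import structures.
From mathcomp Require Import all_boot all_order all_algebra.
From mathcomp Require Import all_classical all_reals all_analysis.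
From mathcomp Require Import ring lra.
Set Implicit Arguments. Unset Strict Implicit. Unset Printing Implicit Defensive.
Import Order.TTheory GRing.Theory Num.Theory.
Import numFieldNormedType.Exports.
Local Open Scope ring_scope.

(* Write d = DF(y)λ, z = (y - x)/τ and p = DF(x)ν for some ν in the simplex, and set
   p' = DF(y)ν, d' = DF(x)λ. Then
     ‖d - p‖² = ⟨d - p', d - z⟩ + ⟨p' - p, d - z⟩ + ⟨d' - p, z - p⟩ + ⟨d - d', z - p⟩.
   The first term is at most 2L‖x - y‖²/τ: moving λ towards ν does not decrease the
   objective, and the descent lemma replaces F(x) - F(y) by its linearization DF(y)ᵀ(x - y).
   The third term is nonpositive because p is the projection of z onto the convex set C(x).
   The second and fourth terms are O(L‖x - y‖) since the gradients are L-Lipschitz.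
   Hence ‖d - p‖² ≤ C₂L‖x - y‖ + 4L‖x - y‖²/τ, and the bound follows by taking roots. *)

Section RealInequalities.
Variable R : realFieldType.

Lemma first_order_coef_ge0 (A B : R) : 0 <= B ->
  (forall t, 0 < t -> t <= 1 -> 0 <= t * A + t ^+ 2 * B) -> 0 <= A.
Proof.
move=> B_ge0 quad_ge0; rewrite leNgt; apply/negP => A_lt0.
have BA_gt0 : 0 < 2 * (B - A) by lra.
(* at this t the quadratic t (A + t B) is negative *)
set t := - A / (2 * (B - A)).
have t_gt0 : 0 < t by rewrite divr_gt0 // oppr_gt0.
have tBA : t * (2 * (B - A)) = - A by rewrite mulfVK // gt_eqF.
have t_le1 : t <= 1 by rewrite ler_pdivrMr // mul1r; lra.
have key : 2 * (B - A) * (A + t * B) = A * (B - 2 * A).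
  by rewrite mulrDr mulrA (mulrC _ t) tBA; ring.
have AtB_lt0 : A + t * B < 0.
  rewrite -(pmulr_rlt0 _ BA_gt0) key nmulr_rlt0 //; lra.
have := quad_ge0 t t_gt0 t_le1.
rewrite expr2 -mulrA -mulrDr pmulr_rge0 //; lra.
Qed.

Lemma le_add_of_sqr_le (a s t : R) : 0 <= a -> 0 <= s -> 0 <= t ->
  a ^+ 2 <= s ^+ 2 + t ^+ 2 -> a <= s + t.
Proof.
move=> a_ge0 s_ge0 t_ge0 ast.
rewrite -(ler_pXn2r (isT : 0 < 2)%N) ?nnegrE ?addr_ge0 // sqrrD.
by apply: le_trans ast _; rewrite lerD2r lerDl mulrn_wge0 ?mulr_ge0.
Qed.

Lemma bigmax_ge0 {m : nat} (F : 'I_m -> R) : 0 <= \big[Num.max/0]_(j < m) F j.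
Proof. by elim/big_rec: _ => // i a _ a_ge0; rewrite le_max a_ge0 orbT. Qed.

End RealInequalities.

Section EuclideanSpace.
Variables (R : realType) (n : nat).
Implicit Types (u v w : 'rV[R]_n).

Lemma dotvDl u w v : dotv (u + w) v = dotv u v + dotv w v.
Proof. by rewrite /dotv -big_split; apply: eq_bigr => i _; rewrite !mxE mulrDl. Qed.

Lemma dotvZl (a : R) u v : dotv (a *: u) v = a * dotv u v.
Proof. by rewrite /dotv mulr_sumr; apply: eq_bigr => i _; rewrite !mxE mulrA. Qed.

Lemma dotvC u v : dotv u v = dotv v u.
Proof. by apply: eq_bigr => i _; rewrite mulrC. Qed.

Lemma dotvNl u v : dotv (- u) v = - dotv u v.
Proof. by rewrite -scaleN1r dotvZl mulN1r. Qed.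

Lemma dotvBl u w v : dotv (u - w) v = dotv u v - dotv w v.
Proof. by rewrite dotvDl dotvNl. Qed.

Lemma dotvDr u w v : dotv v (u + w) = dotv v u + dotv v w.
Proof. by rewrite dotvC dotvDl !(dotvC v). Qed.

Lemma dotvBr u w v : dotv v (u - w) = dotv v u - dotv v w.
Proof. by rewrite dotvC dotvBl !(dotvC v). Qed.

Lemma dotvZr (a : R) u v : dotv v (a *: u) = a * dotv v u.
Proof. by rewrite dotvC dotvZl dotvC. Qed.

Lemma dotv0l v : dotv 0 v = 0.
Proof. by rewrite /dotv big1 // => i _; rewrite mxE mul0r. Qed.

Lemma dotv_suml {m : nat} (F : 'I_m -> 'rV[R]_n) v :
  dotv (\sum_(j < m) F j) v = \sum_(j < m) dotv (F j) v.
Proof.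
rewrite /dotv; under eq_bigr => i _ do rewrite summxE mulr_suml.
by rewrite exchange_big.
Qed.

Lemma dotvv_ge0 u : 0 <= dotv u u.
Proof. by apply: sumr_ge0 => i _; rewrite -expr2 sqr_ge0. Qed.

Lemma dotvv_eq0 u : dotv u u = 0 -> u = 0.
Proof.
move=> u0; apply/rowP => i; rewrite mxE.
have : u 0 i * u 0 i = 0 by apply: (psumr_eq0P _ u0) => // j _; rewrite -expr2 sqr_ge0.
by move/eqP; rewrite mulf_eq0 orbb => /eqP.
Qed.

Lemma dotv_sqr_le u v : dotv u v ^+ 2 <= dotv u u * dotv v v.
Proof.
have [v0|vN0] := eqVneq (dotv v v) 0.
  by rewrite (dotvv_eq0 v0) dotvC !dotv0l expr0n mulr0.
have vpos : 0 < dotv v v by rewrite lt0r vN0 dotvv_ge0.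
(* expand 0 <= |u - t v|^2 at the minimizing t *)
set t := dotv u v / dotv v v.
have := mulr_ge0 (ltW vpos) (dotvv_ge0 (u - t *: v)).
rewrite dotvBl !dotvBr !dotvZl !dotvZr (dotvC v u).
have -> : dotv v v * (dotv u u - t * dotv u v - (t * dotv u v - t * (t * dotv v v))) =
    dotv u u * dotv v v - dotv u v ^+ 2 by rewrite /t; field.
by rewrite subr_ge0.
Qed.

Lemma enorm_ge0 u : 0 <= enorm u.
Proof. exact: sqrtr_ge0. Qed.

Lemma enorm_sqr u : enorm u ^+ 2 = dotv u u.
Proof. by rewrite sqr_sqrtr // dotvv_ge0. Qed.

Lemma enorm0 : enorm (0 : 'rV[R]_n) = 0.
Proof. by rewrite /enorm dotv0l sqrtr0. Qed.

Lemma normr_dotv_le u v : `|dotv u v| <= enorm u * enorm v.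
Proof.
by rewrite -sqrtr_sqr -sqrtrM ?dotvv_ge0 //; apply/ler_wsqrtr/dotv_sqr_le.
Qed.

Lemma dotv_le u v : dotv u v <= enorm u * enorm v.
Proof. exact: le_trans (ler_norm _) (normr_dotv_le u v). Qed.

Lemma enormZ (a : R) u : enorm (a *: u) = `|a| * enorm u.
Proof. by rewrite /enorm dotvZl dotvZr mulrA -expr2 sqrtrM ?sqr_ge0 // sqrtr_sqr. Qed.

Lemma enormN u : enorm (- u) = enorm u.
Proof. by rewrite -scaleN1r enormZ normrN normr1 mul1r. Qed.

Lemma enormBC u v : enorm (u - v) = enorm (v - u).
Proof. by rewrite -enormN opprB. Qed.

Lemma enormD u v : enorm (u + v) <= enorm u + enorm v.
Proof.
rewrite -(ler_pXn2r (isT : 0 < 2)%N) ?nnegrE ?addr_ge0 ?enorm_ge0 //.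
rewrite sqrrD !enorm_sqr dotvDl !dotvDr (dotvC v u).
have := dotv_le u v; lra.
Qed.

Lemma enormB_le u v : enorm (u - v) <= enorm u + enorm v.
Proof. by rewrite -(enormN v) enormD. Qed.

Lemma dotv_subr_le u v w : dotv u (v - w) <= enorm u * (enorm v + enorm w).
Proof. exact: le_trans (dotv_le _ _) (ler_wpM2l (enorm_ge0 _) (enormB_le _ _)). Qed.

Lemma enorm_sum_le {m : nat} (F : 'I_m -> 'rV[R]_n) :
  enorm (\sum_(j < m) F j) <= \sum_(j < m) enorm (F j).
Proof.
elim/big_ind2: _ => [|u a w b ua wb|//]; first by rewrite enorm0.
exact: le_trans (enormD _ _) (lerD ua wb).
Qed.

Lemma enorm_conv_le {m : nat} (w : 'rV[R]_m) (F : 'I_m -> 'rV[R]_n) (M : R) :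
  simplex w -> (forall j, enorm (F j) <= M) -> enorm (\sum_(j < m) w 0 j *: F j) <= M.
Proof.
move=> [w_ge0 w_sum1] FM; apply: le_trans (enorm_sum_le _) _.
rewrite -[M]mul1r -w_sum1 mulr_suml; apply: ler_sum => j _.
by rewrite enormZ ger0_norm ?ler_wpM2l.
Qed.

Lemma sqr_enorm_sub_split (a b c e z : 'rV[R]_n) :
  enorm (a - b) ^+ 2 =
  dotv (a - c) (a - z) + dotv (c - b) (a - z) + dotv (e - b) (z - b) + dotv (a - e) (z - b).
Proof.
have acb : a - c + (c - b) = a - b by rewrite addrA subrK.
have eab : e - b + (a - e) = a - b by rewrite addrC addrA subrK.
have azb : a - z + (z - b) = a - b by rewrite addrA subrK.
by rewrite enorm_sqr -(dotvDl (a - c)) acb -addrA -(dotvDl (e - b)) eab -dotvDr azb.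
Qed.

Lemma is_proj_obtuse (C : 'rV[R]_n -> Prop) z p c :
  (forall a b t, C a -> C b -> 0 <= t -> t <= 1 -> C (a + t *: (b - a))) ->
  is_proj C z p -> C c -> dotv (c - p) (z - p) <= 0.
Proof.
move=> C_convex [Cp p_min] Cc.
suff : 0 <= -2 * dotv (c - p) (z - p) by lra.
apply: (first_order_coef_ge0 (dotvv_ge0 (c - p))) => t t_gt0 t_le1.
have := p_min _ (C_convex _ _ _ Cp Cc (ltW t_gt0) t_le1).
rewrite /enorm ler_sqrt ?dotvv_ge0 // opprD addrA.
move: (z - p) (c - p) => q w.
rewrite !dotvBl !dotvBr !dotvZl !dotvZr (dotvC w q); lra.
Qed.

End EuclideanSpace.

Section SimplexWeights.
Variables (R : realType) (m n : nat) (f : 'I_m -> 'rV[R]_n -> R).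

Lemma simplex_segment (l mu : 'rV[R]_m) (t : R) :
  simplex l -> simplex mu -> 0 <= t -> t <= 1 -> simplex (l + t *: (mu - l)).
Proof.
move=> [l_ge0 l_sum1] [mu_ge0 mu_sum1] t_ge0 t_le1; split=> [j|].
  rewrite !mxE.
  have -> : l 0 j + t * (mu 0 j - l 0 j) = (1 - t) * l 0 j + t * mu 0 j by ring.
  by rewrite addr_ge0 // mulr_ge0 // subr_ge0.
rewrite (eq_bigr (fun j => l 0 j + t * (mu 0 j - l 0 j))) => [|j _]; last by rewrite !mxE.
by rewrite big_split /= -mulr_sumr sumrB l_sum1 mu_sum1 subrr mulr0 addr0.
Qed.

Lemma DFmulD y (a b : 'rV[R]_m) : DFmul f y (a + b) = DFmul f y a + DFmul f y b.
Proof. by rewrite /DFmul -big_split; apply: eq_bigr => j _; rewrite mxE scalerDl. Qed.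

Lemma DFmulZ y (t : R) (a : 'rV[R]_m) : DFmul f y (t *: a) = t *: DFmul f y a.
Proof. by rewrite /DFmul scaler_sumr; apply: eq_bigr => j _; rewrite mxE scalerA. Qed.

Lemma DFmulB y (a b : 'rV[R]_m) : DFmul f y (a - b) = DFmul f y a - DFmul f y b.
Proof. by rewrite DFmulD -scaleN1r DFmulZ scaleN1r. Qed.

Lemma convgrad_convex x a b (t : R) : convgrad f x a -> convgrad f x b ->
  0 <= t -> t <= 1 -> convgrad f x (a + t *: (b - a)).
Proof.
move=> [la [la_simplex ->]] [lb [lb_simplex ->]] t_ge0 t_le1.
exists (la + t *: (lb - la)); split; first exact: simplex_segment.
by rewrite DFmulD DFmulZ DFmulB.
Qed.

Lemma argmin_simplex_variational tau x y (lam mu : 'rV[R]_m) :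
  0 < tau -> is_argmin_simplex f tau x y lam -> simplex mu ->
  0 <= \sum_(j < m) (mu 0 j - lam 0 j) * (f j x - f j y)
       + tau * dotv (DFmul f y lam) (DFmul f y mu - DFmul f y lam).
Proof.
move=> tau_gt0 [lam_simplex lam_min] mu_simplex.
set d := DFmul f y lam; set w := DFmul f y mu - d.
set S := \sum_(j < m) _; set S0 := \sum_(j < m) lam 0 j * (f j x - f j y).
have wB : 0 <= tau / 2 * dotv w w by rewrite mulr_ge0 ?dotvv_ge0 ?divr_ge0 ?ltW.
apply: (first_order_coef_ge0 wB) => t t_gt0 t_le1.
have := lam_min _ (simplex_segment lam_simplex mu_simplex (ltW t_gt0) t_le1).
rewrite /lam_obj DFmulD DFmulZ DFmulB -/d -/w !enorm_sqr; clearbody w.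
have -> : \sum_(j < m) (lam + t *: (mu - lam)) 0 j * (f j x - f j y) = S0 + t * S.
  rewrite mulr_sumr -big_split; apply: eq_bigr => j _.
  by rewrite !mxE mulrDl -mulrA.
rewrite -/S0 dotvDl !dotvDr !dotvZl !dotvZr (dotvC w d) -subr_ge0.
move/le_trans; apply; rewrite le_eqVlt; apply/orP; left; apply/eqP.
by rewrite -/S0 expr2; field.
Qed.

End SimplexWeights.

Section Linearization.
Variables (R : realType) (n : nat) (f : 'rV[R]_n -> R).

Lemma diff_dotv_grad (a v : 'rV[R]_n) : 'd f a v = dotv (grad f a) v.
Proof.
rewrite {1}(row_sum_delta v) linear_sum; apply: eq_bigr => i _.
by rewrite linearZ /= mxE mulrC.
Qed.

Hypothesis f_diff : forall a, differentiable f a.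

Lemma is_derive_line (y e : 'rV[R]_n) (t : R) :
  is_derive t 1 (fun s : R => f (y + s *: e)) (dotv (grad f (y + t *: e)) e).
Proof.
have quotE : (fun h : R => h^-1 *: (((fun s => f (y + s *: e)) \o shift t) (h *: 1)
                 - f (y + t *: e))) =
             (fun h : R => h^-1 *: ((f \o shift (y + t *: e)) (h *: e) - f (y + t *: e))).
  apply/funext => h /=.
  by rewrite -[h%:A]/(h * 1) mulr1 scalerDl addrCA.
have f_der : derivable f (y + t *: e) e by exact: diff_derivable.
split; first by rewrite /derivable quotE.
by rewrite /derive quotE -/(derive f (y + t *: e) e) deriveE // diff_dotv_grad.
Qed.

Variable Lf : R.
Hypotheses (Lf_ge0 : 0 <= Lf)
  (grad_lip : forall u v, enorm (grad f u - grad f v) <= Lf * enorm (u - v)).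

Lemma abs_linearization_le (x y : 'rV[R]_n) :
  `|f x - f y - dotv (grad f y) (x - y)| <= Lf * enorm (x - y) ^+ 2.
Proof.
set e := x - y.
have phi_cont : {within `[0, 1], continuous (fun s : R => f (y + s *: e))}%classic.
  by apply: derivable_within_continuous => s _; have [] := is_derive_line y e s.
have yex : y + e = x by rewrite addrC subrK.
have [c c01] := MVT ltr01 (fun s _ => is_derive_line y e s) phi_cont.
rewrite scale1r scale0r addr0 subr0 mulr1 yex => ->; rewrite -dotvBl.
apply: le_trans (normr_dotv_le _ _) _.
have c_le1 : `|c| <= 1.
  by move: c01; rewrite in_itv /= => /andP[c_gt0 c_lt1]; rewrite ger0_norm ltW.
rewrite expr2 mulrA ler_wpM2r ?enorm_ge0 //.
apply: le_trans (grad_lip _ _) _; rewrite addrC addKr enormZ mulrA.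
by rewrite ler_wpM2r ?enorm_ge0 // ler_piMr.
Qed.

End Linearization.

Section MultiObjective.
Variables (R : realType) (m n : nat) (f : 'I_m -> 'rV[R]_n -> R) (Lj : 'I_m -> R).
Hypotheses (f_diff : forall j x, differentiable (f j) x) (Lj_ge0 : forall j, 0 <= Lj j)
  (grad_lip : forall j u v, enorm (grad (f j) u - grad (f j) v) <= Lj j * enorm (u - v)).

Local Notation L := (\big[Num.max/0]_(j < m) Lj j).
Local Notation G := (\big[Num.max/0]_(j < m) enorm (grad (f j) 0)).

Lemma grad_lipL j (u v : 'rV[R]_n) : enorm (grad (f j) u - grad (f j) v) <= L * enorm (u - v).
Proof. by apply: le_trans (grad_lip j u v) _; rewrite ler_wpM2r ?enorm_ge0 ?le_bigmax. Qed.

Lemma enorm_DFmulB_le (w : 'rV[R]_m) (x y : 'rV[R]_n) : simplex w ->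
  enorm (DFmul f y w - DFmul f x w) <= L * enorm (x - y).
Proof.
move=> w_simplex; rewrite /DFmul -sumrB.
under eq_bigr => j _ do rewrite -scalerBr.
by apply: enorm_conv_le => // j; rewrite (enormBC x); apply: grad_lipL.
Qed.

Lemma enorm_DFmul_le (w : 'rV[R]_m) (y : 'rV[R]_n) : simplex w ->
  enorm (DFmul f y w) <= L * enorm y + G.
Proof.
move=> w_simplex; apply: enorm_conv_le => // j.
rewrite -(subrK (grad (f j) 0) (grad (f j) y)).
apply: le_trans (enormD _ _) (lerD _ (le_bigmax _ _ j)).
by rewrite -[y in L * enorm y]subr0; apply: grad_lipL.
Qed.

(* the descent lemma, averaged with the signed weights nu - lam *)
Lemma sum_weights_gap_le (lam nu : 'rV[R]_m) (x y : 'rV[R]_n) :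
  simplex lam -> simplex nu ->
  \sum_(j < m) (nu 0 j - lam 0 j) * (f j x - f j y) <=
  dotv (DFmul f y nu - DFmul f y lam) (x - y) + 2 * (L * enorm (x - y) ^+ 2).
Proof.
move=> [lam_ge0 lam_sum1] [nu_ge0 nu_sum1].
set K := L * enorm (x - y) ^+ 2.
have lin_le j : `|f j x - f j y - dotv (grad (f j) y) (x - y)| <= K.
  apply: le_trans (abs_linearization_le (f_diff j) (Lj_ge0 j) (grad_lip j) x y) _.
  by rewrite ler_wpM2r ?sqr_ge0 ?le_bigmax.
have -> : dotv (DFmul f y nu - DFmul f y lam) (x - y) =
    \sum_(j < m) (nu 0 j - lam 0 j) * dotv (grad (f j) y) (x - y).
  rewrite dotvBl /DFmul !dotv_suml -sumrB; apply: eq_bigr => j _.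
  by rewrite !dotvZl mulrBl.
have -> : 2 * K = \sum_(j < m) (nu 0 j + lam 0 j) * K.
  by rewrite -mulr_suml big_split /= nu_sum1 lam_sum1.
rewrite -big_split /=; apply: ler_sum => j _.
move: (lin_le j) (nu_ge0 j) (lam_ge0 j); rewrite ler_norml => /andP[].
move: (nu 0 j) (lam 0 j) (f j x - f j y) (dotv (grad (f j) y) (x - y)) => a b c e.
nra.
Qed.

Lemma argmin_dotv_le (tau : R) (x y : 'rV[R]_n) (lam nu : 'rV[R]_m) :
  0 < tau -> is_argmin_simplex f tau x y lam -> simplex nu ->
  dotv (DFmul f y lam - DFmul f y nu) (DFmul f y lam - tau^-1 *: (y - x))
    <= 2 * (L * enorm (x - y) ^+ 2) / tau.
Proof.
move=> tau_gt0 lam_min nu_simplex.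
have := argmin_simplex_variational tau_gt0 lam_min nu_simplex.
have := sum_weights_gap_le x y lam_min.1 nu_simplex.
have -> : x - y = - tau *: (tau^-1 *: (y - x)).
  by rewrite scalerA mulNr divff ?gt_eqF // scaleN1r opprB.
set d := DFmul f y lam; set p' := DFmul f y nu; set z := tau^-1 *: (y - x).
rewrite ler_pdivlMr // !dotvBl !dotvBr !dotvZr (dotvC p' d).
lra.
Qed.

Lemma sqr_enorm_DFmul_sub_proj_le (tau : R) (x y : 'rV[R]_n) (lam : 'rV[R]_m) p :
  0 < tau -> is_argmin_simplex f tau x y lam ->
  is_proj (convgrad f x) (tau^-1 *: (y - x)) p ->
  enorm (DFmul f y lam - p) ^+ 2 <=
  (L * (enorm x + enorm y) + 2 * G) * L * enorm (x - y) + 4 * L * enorm (x - y) ^+ 2 / tau.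
Proof.
move=> tau_gt0 lam_min p_proj.
have [[nu [nu_simplex pE]] _] := p_proj.
have lam_simplex := lam_min.1.
have L_ge0 : 0 <= L := bigmax_ge0 _.
set d := DFmul f y lam; set z := tau^-1 *: (y - x); set dxy := enorm (x - y).
have Ld_ge0 : 0 <= L * dxy by rewrite mulr_ge0 ?enorm_ge0.
have zE : enorm z = dxy / tau.
  by rewrite enormZ ger0_norm ?invr_ge0 ?ltW // (enormBC y) mulrC.
have d_le : enorm d <= L * enorm y + G := enorm_DFmul_le y lam_simplex.
have p_le : enorm p <= L * enorm x + G by rewrite pE; apply: enorm_DFmul_le.
rewrite (sqr_enorm_sub_split d p (DFmul f y nu) (DFmul f x lam) z).
have T1 : dotv (d - DFmul f y nu) (d - z) <= 2 * (L * dxy ^+ 2) / tau :=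
  argmin_dotv_le tau_gt0 lam_min nu_simplex.
have T2 : dotv (DFmul f y nu - p) (d - z) <= L * dxy * (enorm d + enorm z).
  apply: le_trans (dotv_subr_le _ _ _) _.
  by rewrite ler_wpM2r ?addr_ge0 ?enorm_ge0 // pE enorm_DFmulB_le.
have T3 : dotv (DFmul f x lam - p) (z - p) <= 0.
  apply: (is_proj_obtuse (@convgrad_convex _ _ _ f x) p_proj).
  by exists lam.
have T4 : dotv (d - DFmul f x lam) (z - p) <= L * dxy * (enorm z + enorm p).
  apply: le_trans (dotv_subr_le _ _ _) _.
  by rewrite ler_wpM2r ?addr_ge0 ?enorm_ge0 // enorm_DFmulB_le.
have T24 : L * dxy * (enorm d + enorm z) + L * dxy * (enorm z + enorm p) <=
    L * dxy * (L * (enorm x + enorm y) + 2 * G + 2 * (dxy / tau)).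
  by rewrite -mulrDr ler_wpM2l // -zE; lra.
have -> : 4 * L * dxy ^+ 2 / tau = 2 * (L * dxy ^+ 2) / tau + L * dxy * (2 * (dxy / tau)).
  by rewrite expr2; field; rewrite gt_eqF.
lra.
Qed.

End MultiObjective.

Theorem mainTheorem5 (R : realType) (m n : nat)
  (f : 'I_m -> 'rV[R]_n -> R) (Lj : 'I_m -> R)
  (hdiff : forall j x, differentiable (f j) x)
  (hcont : forall j, continuous (grad (f j)))
  (hLj : forall j, 0 <= Lj j)
  (hlip : forall j u v, enorm (grad (f j) u - grad (f j) v) <= Lj j * enorm (u - v))
  (C1 tau : R) (hC1 : 0 < C1) (htau : 0 < tau)
  (x y : 'rV[R]_n) (hxy : enorm x + enorm y <= C1)
  (lam : 'rV[R]_m) (hlam : is_argmin_simplex f tau x y lam)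
  (p : 'rV[R]_n) (hp : is_proj (convgrad f x) (tau^-1 *: (y - x)) p) :
  let L := \big[Num.max/0]_(j < m) Lj j in
  let C2 := L * C1 + 2 * \big[Num.max/0]_(j < m) enorm (grad (f j) 0) in
  enorm (DFmul f y lam - p)
    <= Num.sqrt (C2 * L) * Num.sqrt (enorm (x - y))
       + Num.sqrt (10 * L / tau) * enorm (x - y).
Proof.
cbv zeta; set L := \big[Num.max/0]_(j < m) Lj j; set C2 := L * C1 + _.
have sq_le := sqr_enorm_DFmul_sub_proj_le hdiff hLj hlip htau hlam hp.
have L_ge0 : 0 <= L := bigmax_ge0 _.
have C2_ge0 : 0 <= C2 by rewrite addr_ge0 ?mulr_ge0 ?bigmax_ge0 ?ltW.
have Ltau_ge0 : 0 <= 10 * L / tau by rewrite divr_ge0 ?mulr_ge0 // ltW.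
move: sq_le; rewrite -/L; set dxy := enorm (x - y) => sq_le.
have dxy_ge0 : 0 <= dxy := enorm_ge0 _.
apply: le_add_of_sqr_le; rewrite ?mulr_ge0 ?sqrtr_ge0 ?enorm_ge0 //.
rewrite !exprMn (sqr_sqrtr (mulr_ge0 C2_ge0 L_ge0)) (sqr_sqrtr dxy_ge0).
rewrite (sqr_sqrtr Ltau_ge0); apply: le_trans sq_le _.
have C2_le : (L * (enorm x + enorm y) + 2 * \big[Num.max/0]_(j < m) enorm (grad (f j) 0))
    * L * dxy <= C2 * L * dxy.
  by rewrite -!mulrA ler_wpM2r ?mulr_ge0 // /C2 lerD2r ler_wpM2l.
have : 0 <= L * dxy ^+ 2 / tau by rewrite divr_ge0 ?mulr_ge0 ?sqr_ge0 // ltW.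
lra.
Qed.
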